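(* For $t>0$ and $n,k\in\mathbb{Z}$ let $v=|n-k|/t$, $\phi_v(\theta)=2-2\cos\theta+v\theta$, and $$[K(t)]_{n,k}=\int_{|\theta+\frac{\pi}{2}|\le\frac{\pi}{6}}\mathrm{e}^{-\mathrm{i}t\phi_v(\theta)}\,d\theta .$$ Then for every $\sigma>1/2$ there is $C>0$ such that for all $t\ge1$ $$\sum_{n,k\in\mathbb{Z}}\big|[K(t)]_{n,k}\big|^2\frac{1}{(1+|n|)^{2\sigma}(1+|k|)^{2\sigma}}\le Ct^{-1}.$$ *)

From Stdlib Require Import Reals.
From Coquelicot Require Import Coquelicot.
Open Scope R_scope.

Definition phi (v theta : R) : R := 2 - 2 * cos theta + v * theta.

Definition vel (t : R) (n k : Z) : R := Rabs (IZR (n - k)) / t.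

Definition expmi (x : R) : C := (cos x, - sin x).

(* [K(t)]_{n,k} = \int_{|theta + pi/2| <= pi/6} e^{-i t phi_v(theta)} dtheta,
   the domain being the interval [-2pi/3, -pi/3]; complex-valued Riemann integral. *)
Definition Kent (t : R) (n k : Z) : C :=
  RInt (V := C_R_CompleteNormedModule)
    (fun theta => expmi (t * phi (vel t n k) theta)) (- (2 * PI / 3)) (- (PI / 3)).

Definition weight (sigma : R) (n k : Z) : R :=
  / (Rpower (1 + Rabs (IZR n)) (2 * sigma) * Rpower (1 + Rabs (IZR k)) (2 * sigma)).

Definition term (sigma t : R) (n k : Z) : R := (Cmod (Kent t n k)) ^ 2 * weight sigma n k.

(* partial sum over the box -N <= n, k <= N *)
Definition box_sum (sigma t : R) (N : nat) : R :=
  sum_f_R0 (fun i => sum_f_R0 (fun j =>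
     term sigma t (Z.of_nat i - Z.of_nat N)%Z (Z.of_nat j - Z.of_nat N)%Z) (2 * N)) (2 * N).

(* Write E(f) = |int_I e^{i (t (2 - 2 cos x) + f x)} dx|^2 on I = [-2pi/3, -pi/3], so that
   |K_{n,k}|^2 = E(|n - k|).  On I we have sin x <= -4/5, so for |n - k| <= t the phase has
   derivative at most -3t/5 and one integration by parts gives E(|n - k|) = O(t^-2).  For
   |n - k| > t one of |n|, |k| exceeds t/2, so the product of the two weights is at most 2/t
   times their sum; and by Bessel's inequality for the Fourier coefficients of e^{i t chi} 1_I
   the sums of E(n - k) along each row and each column are at most 2 pi |I|.  A Schur test,
   with sum_z (1 + |z|)^(-2 sigma) < oo for sigma > 1/2, adds everything up to O(1/t). *)

From Stdlib Require Import Reals Lra Lia ZArith.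
From Coquelicot Require Import Coquelicot.
Open Scope R_scope.

Lemma sum_f_R0_telescope (u : nat -> R) n :
  sum_f_R0 (fun i => u (S i) - u i) n = u (S n) - u O.
Proof. induction n as [|n IH]; simpl; [|rewrite IH]; ring. Qed.

Lemma sum_f_R0_mult_l c (u : nat -> R) n :
  sum_f_R0 (fun i => c * u i) n = c * sum_f_R0 u n.
Proof. rewrite scal_sum. apply sum_eq. intros; ring. Qed.

Lemma sum_f_R0_mult (u v : nat -> R) n m :
  sum_f_R0 u n * sum_f_R0 v m = sum_f_R0 (fun i => sum_f_R0 (fun j => u i * v j) m) n.
Proof.
  induction n as [|n IH]; simpl; rewrite sum_f_R0_mult_l; [reflexivity|].
  now rewrite Rmult_plus_distr_r, IH.
Qed.

Lemma sum_f_R0_swap (u : nat -> nat -> R) n m :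
  sum_f_R0 (fun i => sum_f_R0 (u i) m) n = sum_f_R0 (fun j => sum_f_R0 (fun i => u i j) n) m.
Proof.
  induction n as [|n IH]; simpl; [reflexivity|].
  rewrite IH, <- sum_plus. reflexivity.
Qed.

Lemma sum_f_R0_delta (u : nat -> R) i n : (i <= n)%nat ->
  sum_f_R0 (fun j => if Nat.eq_dec i j then u j else 0) n = u i.
Proof.
  assert (Hlt : forall m, (m < i)%nat ->
            sum_f_R0 (fun j => if Nat.eq_dec i j then u j else 0) m = 0).
  { induction m as [|m IH]; intros Hm; simpl.
    - destruct (Nat.eq_dec i 0); [lia|reflexivity].
    - rewrite IH by lia. destruct (Nat.eq_dec i (S m)); [lia|ring]. }
  induction n as [|n IH]; intros Hn; simpl.
  - destruct (Nat.eq_dec i 0); [now subst|lia].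
  - destruct (Nat.eq_dec i (S n)) as [->|Hi].
    + rewrite Hlt by lia. ring.
    + rewrite IH by lia. ring.
Qed.

Lemma double_sum_schur (a g : nat -> nat -> R) (w : nat -> R) (A W B : R) n :
  0 <= A -> (forall i, 0 <= w i) -> sum_f_R0 w n <= W ->
  (forall i j, 0 <= g i j) ->
  (forall i, (i <= n)%nat -> sum_f_R0 (g i) n <= B) ->
  (forall j, (j <= n)%nat -> sum_f_R0 (fun i => g i j) n <= B) ->
  (forall i j, (i <= n)%nat -> (j <= n)%nat -> a i j <= A * (w i * w j) + (w i + w j) * g i j) ->
  sum_f_R0 (fun i => sum_f_R0 (a i) n) n <= A * W ^ 2 + 2 * (W * B).
Proof.
  intros HA Hw HW Hg Hrow Hcol Ha.
  assert (Hw0 : 0 <= sum_f_R0 w n) by now apply cond_pos_sum.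
  assert (HB : 0 <= B) by (eapply Rle_trans, (Hrow O); [apply cond_pos_sum|]; auto; lia).
  assert (Hweighted : forall h : nat -> R, (forall i, (i <= n)%nat -> h i <= B) ->
            sum_f_R0 (fun i => w i * h i) n <= W * B).
  { intros h Hh. apply Rle_trans with (sum_f_R0 (fun i => B * w i) n).
    - apply sum_Rle. intros i Hi. specialize (Hh i Hi). specialize (Hw i). nra.
    - rewrite sum_f_R0_mult_l. nra. }
  apply Rle_trans with (sum_f_R0 (fun i => sum_f_R0 (fun j =>
      A * (w i * w j) + w i * g i j + w j * g i j) n) n).
  { apply sum_Rle. intros i Hi. apply sum_Rle. intros j Hj.
    specialize (Ha i j Hi Hj). lra. }
  rewrite (sum_eq _ (fun i => A * w i * sum_f_R0 w n + w i * sum_f_R0 (g i) n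
                             + sum_f_R0 (fun j => w j * g i j) n)).
  2:{ intros i _. rewrite !sum_plus, (sum_f_R0_mult_l A), !(sum_f_R0_mult_l (w i)). ring. }
  rewrite !sum_plus, sum_f_R0_swap.
  rewrite (sum_eq (fun j => sum_f_R0 (fun i => w j * g i j) n)
                  (fun j => w j * sum_f_R0 (fun i => g i j) n))
    by (intros; now rewrite sum_f_R0_mult_l).
  assert (H1 : sum_f_R0 (fun i => A * w i * sum_f_R0 w n) n <= A * W ^ 2).
  { rewrite (sum_eq _ (fun i => A * sum_f_R0 w n * w i)) by (intros; ring).
    rewrite (sum_f_R0_mult_l (A * sum_f_R0 w n)).
    assert (sum_f_R0 w n ^ 2 <= W ^ 2) by (apply pow_incr; lra). nra. }
  assert (H2 := Hweighted _ Hrow). assert (H3 := Hweighted _ Hcol). lra.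
Qed.

Lemma is_RInt_sum_f_R0 (f : nat -> R -> R) (I : nat -> R) a b n :
  (forall j, (j <= n)%nat -> is_RInt (f j) a b (I j)) ->
  is_RInt (fun x => sum_f_R0 (fun j => f j x) n) a b (sum_f_R0 I n).
Proof.
  induction n as [|n IH]; intros HI; simpl; [now apply HI|].
  apply (is_RInt_plus (V:=R_NormedModule)); [apply IH; intros j Hj|]; apply HI; lia.
Qed.

Lemma RInt_le_of_subinterval (f : R -> R) a b c d :
  c <= a -> a <= b -> b <= d -> ex_RInt f c d -> (forall x, c <= x <= d -> 0 <= f x) ->
  RInt f a b <= RInt f c d.
Proof.
  intros Hca Hab Hbd Hf Hpos.
  assert (Hcb : ex_RInt f c b) by (apply (ex_RInt_Chasles_1 f c b d); [lra|auto]).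
  assert (Hbd' : ex_RInt f b d) by (apply (ex_RInt_Chasles_2 f c b d); [lra|auto]).
  assert (Hca' : ex_RInt f c a) by (apply (ex_RInt_Chasles_1 f c a b); [lra|auto]).
  assert (Hab' : ex_RInt f a b) by (apply (ex_RInt_Chasles_2 f c a b); [lra|auto]).
  rewrite <- (RInt_Chasles f c b d), <- (RInt_Chasles f c a b) by auto.
  unfold plus; simpl.
  assert (0 <= RInt f c a) by (apply RInt_ge_0; auto; intros; apply Hpos; lra).
  assert (0 <= RInt f b d) by (apply RInt_ge_0; auto; intros; apply Hpos; lra).
  lra.
Qed.

Lemma is_RInt_cos_sin_int_freq (d : Z) (A B : R) : d <> 0%Z ->
  is_RInt (fun x => A * cos (IZR d * x) + B * sin (IZR d * x)) (- PI) PI 0.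
Proof.
  intros Hd. apply not_0_IZR in Hd.
  set (G x := (A * sin (IZR d * x) - B * cos (IZR d * x)) / IZR d).
  replace 0 with (minus (G PI) (G (- PI))).
  - apply (is_RInt_derive G).
    + intros x _. unfold G. auto_derive; [auto|]. field. auto.
    + intros x _. apply (ex_derive_continuous (V:=R_NormedModule)). auto_derive. auto.
  - assert (Hsin : sin (IZR d * PI) = 0) by (apply sin_eq_0_1; now exists d).
    unfold G, minus, plus, opp; simpl.
    replace (IZR d * - PI) with (- (IZR d * PI)) by ring.
    rewrite sin_neg, cos_neg, Hsin. field. auto.
Qed.

Section TrigPolynomial.

Variables (p q : nat -> R) (F : nat -> Z) (n : nat).

(* [trig_re - i trig_im] is the trigonometric polynomial [sum_j (p_j - i q_j) e^{i F_j x}]. *)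
Definition trig_re x := sum_f_R0 (fun j => p j * cos (IZR (F j) * x) + q j * sin (IZR (F j) * x)) n.
Definition trig_im x := sum_f_R0 (fun j => q j * cos (IZR (F j) * x) - p j * sin (IZR (F j) * x)) n.

Let cross j l x := (p j * p l + q j * q l) * cos (IZR (F j - F l) * x)
                 + (q j * p l - p j * q l) * sin (IZR (F j - F l) * x).

Let trig_sq_expand x :
  trig_re x ^ 2 + trig_im x ^ 2 = sum_f_R0 (fun j => sum_f_R0 (fun l => cross j l x) n) n.
Proof.
  unfold trig_re, trig_im. simpl pow. rewrite !Rmult_1_r, !sum_f_R0_mult, <- sum_plus.
  apply sum_eq. intros j _. rewrite <- sum_plus. apply sum_eq. intros l _. unfold cross.
  rewrite minus_IZR, (Rmult_minus_distr_r (IZR (F j))), cos_minus, sin_minus. ring.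
Qed.

Hypothesis F_inj : forall j l, (j <= n)%nat -> (l <= n)%nat -> F j = F l -> j = l.

Lemma is_RInt_trig_sq :
  is_RInt (fun x => trig_re x ^ 2 + trig_im x ^ 2) (- PI) PI
    (2 * PI * sum_f_R0 (fun j => p j ^ 2 + q j ^ 2) n).
Proof.
  apply (is_RInt_ext (fun x => sum_f_R0 (fun j => sum_f_R0 (fun l => cross j l x) n) n)).
  { intros x _. symmetry. apply trig_sq_expand. }
  replace (2 * PI * sum_f_R0 (fun j => p j ^ 2 + q j ^ 2) n) with
    (sum_f_R0 (fun j => sum_f_R0 (fun l =>
       if Nat.eq_dec j l then 2 * PI * (p l ^ 2 + q l ^ 2) else 0) n) n).
  2:{ rewrite <- sum_f_R0_mult_l. apply sum_eq. intros j Hj.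
      now rewrite (sum_f_R0_delta (fun l => 2 * PI * (p l ^ 2 + q l ^ 2))). }
  apply is_RInt_sum_f_R0. intros j Hj. apply is_RInt_sum_f_R0. intros l Hl.
  destruct (Nat.eq_dec j l) as [<-|Hjl].
  - apply (is_RInt_ext (fun _ => p j ^ 2 + q j ^ 2)).
    { intros x _. unfold cross. rewrite Z.sub_diag, Rmult_0_l, cos_0, sin_0. simpl; ring. }
    replace (2 * PI * (p j ^ 2 + q j ^ 2)) with (scal (PI - - PI) (p j ^ 2 + q j ^ 2))
      by (unfold scal; simpl; unfold mult; simpl; ring).
    apply (is_RInt_const (V:=R_NormedModule)).
  - apply is_RInt_cos_sin_int_freq. intros Hd. apply Hjl, F_inj; auto. lia.
Qed.

End TrigPolynomial.

Definition osc_cos (psi : R -> R) (a b f : R) := RInt (fun x => cos (psi x + f * x)) a b.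
Definition osc_sin (psi : R -> R) (a b f : R) := RInt (fun x => sin (psi x + f * x)) a b.
Definition osc_energy (psi : R -> R) (a b f : R) := osc_cos psi a b f ^ 2 + osc_sin psi a b f ^ 2.

Lemma osc_energy_ge0 psi a b f : 0 <= osc_energy psi a b f.
Proof. unfold osc_energy. nra. Qed.

Lemma le_amgm s c : 0 < c -> s <= c + s ^ 2 / (4 * c).
Proof.
  intros Hc.
  assert (0 <= (s - 2 * c) ^ 2 / (4 * c)) by (apply Rdiv_le_0_compat; [apply pow2_ge_0|lra]).
  replace (c + s ^ 2 / (4 * c)) with (s + (s - 2 * c) ^ 2 / (4 * c)) by (field; lra). lra.
Qed.

Section Bessel.

Variables (psi : R -> R) (a b : R) (F : nat -> Z) (n : nat).
Hypothesis psi_cont : forall x, continuous psi x.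
Hypothesis interval_sub : - PI <= a <= b /\ b <= PI.
Hypothesis F_inj : forall j l, (j <= n)%nat -> (l <= n)%nat -> F j = F l -> j = l.

Let P j := osc_cos psi a b (IZR (F j)).
Let Q j := osc_sin psi a b (IZR (F j)).
Let energy := sum_f_R0 (fun j => P j ^ 2 + Q j ^ 2) n.
Let trig_sq x := trig_re P Q F n x ^ 2 + trig_im P Q F n x ^ 2.

Let phase_cont f x : continuous (fun y => psi y + f * y) x.
Proof.
  apply (continuous_plus (V:=R_NormedModule)); [auto|].
  apply (continuous_mult (K:=R_AbsRing)); [apply continuous_const|apply continuous_id].
Qed.

Let is_RInt_osc_cos j : is_RInt (fun x => cos (psi x + IZR (F j) * x)) a b (P j).
Proof.
  apply (RInt_correct (V:=R_CompleteNormedModule)).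
  apply (ex_RInt_continuous (V:=R_CompleteNormedModule)).
  intros x _. apply continuous_cos_comp, phase_cont.
Qed.

Let is_RInt_osc_sin j : is_RInt (fun x => sin (psi x + IZR (F j) * x)) a b (Q j).
Proof.
  apply (RInt_correct (V:=R_CompleteNormedModule)).
  apply (ex_RInt_continuous (V:=R_CompleteNormedModule)).
  intros x _. apply continuous_sin_comp, phase_cont.
Qed.

(* [pairing = Re (e^{i psi} T)] and [trig_sq = |T|^2] for [T = trig_re - i trig_im]. *)
Let pairing x := cos (psi x) * trig_re P Q F n x + sin (psi x) * trig_im P Q F n x.

Let is_RInt_pairing : is_RInt pairing a b energy.
Proof.
  apply (is_RInt_ext (fun x => sum_f_R0 (fun j =>
           P j * cos (psi x + IZR (F j) * x) + Q j * sin (psi x + IZR (F j) * x)) n)).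
  { intros x _. unfold pairing, trig_re, trig_im.
    rewrite !scal_sum, <- sum_plus. apply sum_eq. intros j _.
    rewrite cos_plus, sin_plus. simpl; ring. }
  apply is_RInt_sum_f_R0. intros j _.
  replace (P j ^ 2 + Q j ^ 2) with (plus (scal (P j) (P j)) (scal (Q j) (Q j)))
    by (unfold plus, scal; simpl; unfold mult; simpl; ring).
  apply (is_RInt_plus (V:=R_NormedModule)); apply (is_RInt_scal (V:=R_NormedModule));
    [apply is_RInt_osc_cos|apply is_RInt_osc_sin].
Qed.

Let pairing_le x : pairing x <= PI + trig_sq x / (4 * PI).
Proof.
  assert (Hcs := sin2_cos2 (psi x)). unfold Rsqr in Hcs.
  assert (Hsq : pairing x ^ 2 <= trig_sq x).
  { unfold pairing, trig_sq.
    set (c := cos (psi x)). set (s := sin (psi x)).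
    set (U := trig_re P Q F n x). set (V := trig_im P Q F n x).
    assert (Hlag : (c * U + s * V) ^ 2 + (c * V - s * U) ^ 2 = (s * s + c * c) * (U ^ 2 + V ^ 2))
      by ring.
    fold s c in Hcs. rewrite Hcs, Rmult_1_l in Hlag.
    assert (0 <= (c * V - s * U) ^ 2) by apply pow2_ge_0. lra. }
  assert (Hpi := PI_RGT_0).
  apply Rle_trans with (PI + pairing x ^ 2 / (4 * PI)); [now apply le_amgm|].
  apply Rplus_le_compat_l, Rmult_le_compat_r; [apply Rlt_le, Rinv_0_lt_compat|]; lra.
Qed.

Lemma bessel_osc_energy :
  sum_f_R0 (fun j => osc_energy psi a b (IZR (F j))) n <= 2 * PI * (b - a).
Proof.
  change (energy <= 2 * PI * (b - a)).
  assert (Hpi := PI_RGT_0).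
  assert (Hfull := is_RInt_trig_sq P Q F n F_inj).
  assert (Hsub : RInt trig_sq a b <= 2 * PI * energy).
  { unfold energy. rewrite <- (is_RInt_unique _ _ _ _ Hfull).
    apply RInt_le_of_subinterval; try lra; [eexists; apply Hfull|].
    intros x _. unfold trig_sq. nra. }
  assert (Hex : ex_RInt trig_sq a b).
  { apply (ex_RInt_Chasles_2 trig_sq (- PI)); [lra|].
    apply (ex_RInt_Chasles_1 trig_sq (- PI) b PI); [lra|]. eexists; apply Hfull. }
  assert (Hmajor : is_RInt (fun x => PI + trig_sq x / (4 * PI)) a b
                    (PI * (b - a) + RInt trig_sq a b / (4 * PI))).
  { apply (is_RInt_ext (fun x => plus PI (scal (/ (4 * PI)) (trig_sq x)))).
    { intros; unfold plus, scal; simpl; unfold mult; simpl; unfold Rdiv; ring. }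
    replace (PI * (b - a) + RInt trig_sq a b / (4 * PI))
      with (plus (scal (b - a) PI) (scal (/ (4 * PI)) (RInt trig_sq a b)))
      by (unfold plus, scal; simpl; unfold mult; simpl; unfold Rdiv; ring).
    apply (is_RInt_plus (V:=R_NormedModule)); [apply (is_RInt_const (V:=R_NormedModule))|].
    apply (is_RInt_scal (V:=R_NormedModule)), (RInt_correct (V:=R_CompleteNormedModule)), Hex. }
  assert (Hbound : energy <= PI * (b - a) + RInt trig_sq a b / (4 * PI)).
  { rewrite <- (is_RInt_unique _ _ _ _ is_RInt_pairing), <- (is_RInt_unique _ _ _ _ Hmajor).
    apply RInt_le; [lra|eexists; apply is_RInt_pairing|eexists; apply Hmajor|].
    intros; apply pairing_le. }
  assert (RInt trig_sq a b / (4 * PI) <= energy / 2).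
  { replace (energy / 2) with (2 * PI * energy / (4 * PI)) by (field; lra).
    apply Rmult_le_compat_r; [apply Rlt_le, Rinv_0_lt_compat|]; lra. }
  lra.
Qed.

End Bessel.

Section NonstationaryPhase.

Variables (psi dpsi ddpsi : R -> R) (a b c M : R).
Hypothesis psi_derive : forall x, is_derive psi x (dpsi x).
Hypothesis dpsi_derive : forall x, is_derive dpsi x (ddpsi x).
Hypothesis ddpsi_cont : forall x, continuous ddpsi x.
Hypothesis a_le_b : a <= b.
Hypothesis c_gt0 : 0 < c.
Hypothesis dpsi_ge : forall x, a <= x <= b -> c <= Rabs (dpsi x).
Hypothesis ddpsi_le : forall x, a <= x <= b -> Rabs (ddpsi x) <= M.

Let psi_cont x : continuous psi x.
Proof. apply (ex_derive_continuous (V:=R_NormedModule)). eexists; apply psi_derive. Qed.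

Let dpsi_neq0 x : a <= x <= b -> dpsi x <> 0.
Proof. intros Hx Hz. specialize (dpsi_ge x Hx). rewrite Hz, Rabs_R0 in dpsi_ge. lra. Qed.

(* Integration by parts: [cos psi = (sin psi / psi')' + sin psi * psi'' / psi'^2]. *)
Let g x := sin (psi x) / dpsi x.
Let h x := sin (psi x) * ddpsi x / dpsi x ^ 2.

Let h_cont x : a <= x <= b -> continuous h x.
Proof.
  intros Hx.
  assert (Hd : continuous dpsi x)
    by (apply (ex_derive_continuous (V:=R_NormedModule)); eexists; apply dpsi_derive).
  apply (continuous_mult (K:=R_AbsRing) (fun y => sin (psi y) * ddpsi y)).
  - apply (continuous_mult (K:=R_AbsRing)); [|auto].
    now apply continuous_sin_comp.
  - apply continuous_Rinv_comp; [|now apply pow_nonzero, dpsi_neq0].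
    apply (continuous_mult (K:=R_AbsRing)); [auto|].
    apply (continuous_mult (K:=R_AbsRing)); [auto|apply continuous_const].
Qed.

Let RInt_cos_by_parts :
  RInt (fun x => cos (psi x)) a b = g b - g a + RInt h a b.
Proof.
  assert (Hh : ex_RInt h a b).
  { apply (ex_RInt_continuous (V:=R_CompleteNormedModule)). intros x Hx.
    rewrite Rmin_left, Rmax_right in Hx by lra. now apply h_cont. }
  assert (Hg : is_RInt (fun x => cos (psi x) - h x) a b (g b - g a)).
  { apply (is_RInt_derive (V:=R_CompleteNormedModule) g);
      intros x Hx; rewrite Rmin_left, Rmax_right in Hx by lra.
    - unfold g, h. auto_derive.
      + repeat split; [eexists; apply psi_derive|eexists; apply dpsi_derive|now apply dpsi_neq0].
      + replace (Derive (fun y => psi y) x) with (dpsi x)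
          by (symmetry; apply is_derive_unique, psi_derive).
        replace (Derive (fun y => dpsi y) x) with (ddpsi x)
          by (symmetry; apply is_derive_unique, dpsi_derive).
        field. now apply dpsi_neq0.
    - apply (continuous_plus (V:=R_NormedModule)).
      + now apply continuous_cos_comp.
      + apply (continuous_opp (V:=R_NormedModule)). now apply h_cont. }
  apply is_RInt_unique.
  apply (is_RInt_ext (fun x => plus (cos (psi x) - h x) (h x))).
  { intros x _. unfold plus; simpl. ring. }
  apply (is_RInt_plus (V:=R_NormedModule)); [exact Hg|].
  now apply (RInt_correct (V:=R_CompleteNormedModule)).
Qed.

Lemma RInt_cos_nonstationary :
  Rabs (RInt (fun x => cos (psi x)) a b) <= 2 / c + (b - a) * (M / c ^ 2).
Proof.
  assert (Hc2 : 0 < c ^ 2) by (apply pow_lt; lra).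
  assert (Hg : forall x, a <= x <= b -> Rabs (g x) <= / c).
  { intros x Hx. unfold g. rewrite Rabs_div by now apply dpsi_neq0.
    assert (Hs : Rabs (sin (psi x)) <= 1) by apply Rabs_le, SIN_bound. specialize (dpsi_ge x Hx).
    unfold Rdiv. apply Rle_trans with (1 * / Rabs (dpsi x)).
    - apply Rmult_le_compat_r; [apply Rlt_le, Rinv_0_lt_compat|]; lra.
    - rewrite Rmult_1_l. apply Rinv_le_contravar; lra. }
  assert (Hh : Rabs (RInt h a b) <= (b - a) * (M / c ^ 2)).
  { apply abs_RInt_le_const; [lra| |].
    - apply (ex_RInt_continuous (V:=R_CompleteNormedModule)). intros x Hx.
      rewrite Rmin_left, Rmax_right in Hx by lra. now apply h_cont.
    - intros x Hx. unfold h. specialize (dpsi_ge x Hx). specialize (ddpsi_le x Hx).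
      assert (Hs : Rabs (sin (psi x)) <= 1) by apply Rabs_le, SIN_bound.
      assert (Hd2 : c ^ 2 <= dpsi x ^ 2).
      { rewrite <- (pow2_abs (dpsi x)). apply pow_incr; lra. }
      unfold Rdiv. rewrite !Rabs_mult, Rabs_inv, (Rabs_pos_eq (dpsi x ^ 2)) by nra.
      assert (/ dpsi x ^ 2 <= / c ^ 2) by (apply Rinv_le_contravar; lra).
      assert (0 < / dpsi x ^ 2) by (apply Rinv_0_lt_compat; lra).
      assert (0 <= Rabs (sin (psi x))) by apply Rabs_pos.
      assert (0 <= Rabs (ddpsi x)) by apply Rabs_pos.
      apply Rle_trans with (1 * M * / dpsi x ^ 2); [|nra].
      apply Rmult_le_compat_r; [lra|]. apply Rmult_le_compat; lra. }
  rewrite RInt_cos_by_parts.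
  assert (Hgb := Hg b (conj a_le_b (Rle_refl b))).
  assert (Hga := Hg a (conj (Rle_refl a) a_le_b)).
  apply Rle_trans with (Rabs (g b) + Rabs (g a) + Rabs (RInt h a b)).
  { unfold Rminus. eapply Rle_trans; [apply Rabs_triang|].
    apply Rplus_le_compat_r. eapply Rle_trans; [apply Rabs_triang|].
    rewrite Rabs_Ropp. lra. }
  replace (2 / c) with (/ c + / c) by (field; lra). lra.
Qed.

End NonstationaryPhase.

Lemma Rpower_pos x y : 0 < Rpower x y.
Proof. apply exp_pos. Qed.

Lemma Rpower_1_l y : Rpower 1 y = 1.
Proof. unfold Rpower. now rewrite ln_1, Rmult_0_r, exp_0. Qed.

Lemma Rpower_opp_antimono x y s : 0 < x <= y -> 0 <= s -> Rpower y (- s) <= Rpower x (- s).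
Proof.
  intros Hxy Hs. rewrite !Rpower_Ropp.
  apply Rinv_le_contravar; [apply Rpower_pos|now apply Rle_Rpower_l].
Qed.

Lemma Rpower_opp_le_1 x s : 1 <= x -> 0 <= s -> Rpower x (- s) <= 1.
Proof. intros Hx Hs. rewrite <- (Rpower_1_l (- s)). apply Rpower_opp_antimono; lra. Qed.

(* Twice [1 + u <= exp u]: once for [u = ln (p / (p + 1))], once for [u = r ln ((p + 1) / p)]. *)
Lemma Rpower_opp_diff_ge r p : 0 < r -> 0 < p ->
  r * Rpower (p + 1) (- (r + 1)) <= Rpower p (- r) - Rpower (p + 1) (- r).
Proof.
  intros Hr Hp. unfold Rpower.
  assert (Ep : exp (ln p) = p) by (apply exp_ln; lra).
  assert (Ep1 : exp (ln (p + 1)) = p + 1) by (apply exp_ln; lra).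
  assert (Hln : 1 / (p + 1) <= ln (p + 1) - ln p).
  { assert (H := exp_ineq1_le (ln p - ln (p + 1))).
    unfold Rminus in H. rewrite exp_plus, exp_Ropp, Ep, Ep1 in H.
    assert (p * / (p + 1) = 1 - 1 / (p + 1)) by (field; lra). lra. }
  replace (- (r + 1) * ln (p + 1)) with (- r * ln (p + 1) + - ln (p + 1)) by ring.
  replace (- r * ln p) with (- r * ln (p + 1) + r * (ln (p + 1) - ln p)) by ring.
  rewrite !exp_plus, exp_Ropp, Ep1.
  assert (H1 := exp_ineq1_le (r * (ln (p + 1) - ln p))).
  assert (H2 := exp_pos (- r * ln (p + 1))).
  assert (r * / (p + 1) <= r * (ln (p + 1) - ln p))
    by (apply Rmult_le_compat_l; unfold Rdiv in Hln; lra).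
  nra.
Qed.

Definition pweight (s : R) (z : Z) := Rpower (1 + Rabs (IZR z)) (- s).

Lemma pweight_bounds s z : 0 <= s -> 0 < pweight s z <= 1.
Proof.
  intros Hs. split; [apply Rpower_pos|].
  apply Rpower_opp_le_1; [|auto]. assert (0 <= Rabs (IZR z)) by apply Rabs_pos. lra.
Qed.

Lemma pweight_le_inv s z : 1 <= s -> pweight s z <= / (1 + Rabs (IZR z)).
Proof.
  intros Hs. assert (0 <= Rabs (IZR z)) by apply Rabs_pos. unfold pweight.
  rewrite <- (Rpower_1 (1 + Rabs (IZR z))) at 2 by lra. rewrite <- Rpower_Ropp.
  apply Rle_Rpower; lra.
Qed.

(* A discrete primitive of [pweight (r + 1)], up to the factor [2 ^ (r + 1) / r];
   its values lie in [[-1, 1]]. *)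
Definition pweight_primitive (r : R) (z : Z) :=
  if Z_lt_le_dec z 0 then Rpower (1 - IZR z) (- r) - 1 else 1 - Rpower (1 + IZR z) (- r).

Lemma pweight_primitive_nonpos r z : (z <= 0)%Z ->
  pweight_primitive r z = Rpower (1 - IZR z) (- r) - 1.
Proof.
  intros Hz. unfold pweight_primitive. destruct (Z_lt_le_dec z 0); [reflexivity|].
  replace z with 0%Z by lia. simpl. rewrite Rminus_0_r, Rplus_0_r, Rpower_1_l. ring.
Qed.

Lemma pweight_primitive_nonneg r z : (0 <= z)%Z ->
  pweight_primitive r z = 1 - Rpower (1 + IZR z) (- r).
Proof. intros Hz. unfold pweight_primitive. destruct (Z_lt_le_dec z 0); [lia|reflexivity]. Qed.

Lemma pweight_primitive_bounds r z : 0 <= r -> -1 <= pweight_primitive r z <= 1.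
Proof.
  intros Hr. unfold pweight_primitive. destruct (Z_lt_le_dec z 0) as [Hz|Hz].
  - apply IZR_lt in Hz.
    assert (H := Rpower_pos (1 - IZR z) (- r)). assert (Rpower (1 - IZR z) (- r) <= 1)
      by (apply Rpower_opp_le_1; lra). lra.
  - apply IZR_le in Hz.
    assert (H := Rpower_pos (1 + IZR z) (- r)). assert (Rpower (1 + IZR z) (- r) <= 1)
      by (apply Rpower_opp_le_1; lra). lra.
Qed.

Lemma pweight_le_primitive_step s z : 1 < s ->
  pweight s z <= Rpower 2 s / (s - 1) *
                   (pweight_primitive (s - 1) (z + 1) - pweight_primitive (s - 1) z).
Proof.
  intros Hs. set (r := s - 1). assert (Hr : 0 < r) by (unfold r; lra).
  replace s with (r + 1) by (unfold r; ring).
  assert (H2 : 1 <= Rpower 2 (r + 1))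
    by (rewrite <- (Rpower_O 2) at 1 by lra; apply Rle_Rpower; lra).
  unfold pweight.
  destruct (Z_lt_le_dec z 0) as [Hz|Hz].
  - rewrite !pweight_primitive_nonpos, plus_IZR by lia.
    assert (Hz1 : IZR z <= -1) by (apply IZR_le; lia).
    rewrite Rabs_left by lra.
    assert (K := Rpower_opp_diff_ge r (- IZR z) Hr ltac:(lra)).
    replace (1 - (IZR z + 1)) with (- IZR z) by ring.
    replace (- IZR z + 1) with (1 + - IZR z) in K by ring.
    replace (1 - IZR z) with (1 + - IZR z) by ring.
    apply Rle_trans with (/ r * (Rpower (- IZR z) (- r) - Rpower (1 + - IZR z) (- r))).
    + apply Rmult_le_reg_l with r; [lra|]. rewrite <- Rmult_assoc, Rinv_r, Rmult_1_l; lra.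
    + assert (0 <= / r * (Rpower (- IZR z) (- r) - Rpower (1 + - IZR z) (- r))).
      { apply Rmult_le_pos; [apply Rlt_le, Rinv_0_lt_compat; lra|].
        assert (0 < Rpower (1 + - IZR z) (- (r + 1))) by apply Rpower_pos. nra. }
      unfold Rdiv. rewrite (Rmult_comm (Rpower 2 (r + 1))), Rmult_assoc. nra.
  - apply IZR_le in Hz.
    rewrite !pweight_primitive_nonneg, plus_IZR by (apply le_IZR; rewrite ?plus_IZR; lra).
    rewrite Rabs_pos_eq by lra.
    assert (K := Rpower_opp_diff_ge r (1 + IZR z) Hr ltac:(lra)).
    replace (1 + IZR z + 1) with (1 + (IZR z + 1)) in K by ring.
    assert (Hhalf : Rpower (1 + IZR z) (- (r + 1))
                    = Rpower 2 (r + 1) * Rpower (2 * (1 + IZR z)) (- (r + 1))).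
    { rewrite <- Rpower_mult_distr, Rpower_Ropp, (Rpower_Ropp 2) by lra.
      field. split; apply Rgt_not_eq, Rpower_pos. }
    assert (Hmono : Rpower (2 * (1 + IZR z)) (- (r + 1)) <= Rpower (1 + (IZR z + 1)) (- (r + 1)))
      by (apply Rpower_opp_antimono; lra).
    rewrite Hhalf. unfold Rdiv. rewrite Rmult_assoc. apply Rmult_le_compat_l; [lra|].
    apply Rle_trans with (Rpower (1 + (IZR z + 1)) (- (r + 1))); [auto|].
    apply Rmult_le_reg_l with r; [lra|]. rewrite <- Rmult_assoc, Rinv_r, Rmult_1_l; lra.
Qed.

Lemma sum_pweight_le s N : 1 < s ->
  sum_f_R0 (fun i => pweight s (Z.of_nat i - Z.of_nat N)) (2 * N) <= 2 * (Rpower 2 s / (s - 1)).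
Proof.
  intros Hs. set (K := Rpower 2 s / (s - 1)).
  set (D i := pweight_primitive (s - 1) (Z.of_nat i - Z.of_nat N)).
  assert (HK : 0 <= K)
    by (apply Rdiv_le_0_compat; [apply Rlt_le, Rpower_pos|lra]).
  apply Rle_trans with (sum_f_R0 (fun i => K * (D (S i) - D i)) (2 * N)).
  - apply sum_Rle. intros i _. unfold D.
    replace (Z.of_nat (S i) - Z.of_nat N)%Z with ((Z.of_nat i - Z.of_nat N) + 1)%Z by lia.
    now apply pweight_le_primitive_step.
  - rewrite sum_f_R0_mult_l, sum_f_R0_telescope.
    assert (B1 := pweight_primitive_bounds (s - 1) (Z.of_nat (S (2 * N)) - Z.of_nat N) ltac:(lra)).
    assert (B0 := pweight_primitive_bounds (s - 1) (Z.of_nat 0 - Z.of_nat N) ltac:(lra)).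
    unfold D. nra.
Qed.

Definition chi (t x : R) := t * (2 - 2 * cos x).

Definition Kent_energy (t f : R) := osc_energy (chi t) (- (2 * PI / 3)) (- (PI / 3)) f.

Lemma Kent_energy_ge0 t f : 0 <= Kent_energy t f.
Proof. apply osc_energy_ge0. Qed.

(* Both signs: this bounds [Kent_energy t |d|], while keeping the frequencies injective
   as Bessel's inequality requires. *)
Definition Kent_energy_sym (t : R) (d : Z) := Kent_energy t (IZR d) + Kent_energy t (IZR (- d)).

Lemma Kent_energy_sym_ge0 t d : 0 <= Kent_energy_sym t d.
Proof.
  unfold Kent_energy_sym.
  assert (H := Kent_energy_ge0 t (IZR d)). assert (H' := Kent_energy_ge0 t (IZR (- d))). lra.
Qed.

Lemma Cmod_Kent_sq t n k : 0 < t ->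
  Cmod (Kent t n k) ^ 2 = Kent_energy t (Rabs (IZR (n - k))).
Proof.
  intros Ht. set (f := Rabs (IZR (n - k))).
  assert (Hphase : forall x, t * phi (vel t n k) x = chi t x + f * x)
    by (intros x; unfold phi, vel, chi, f; field; lra).
  assert (Hint : forall g : R -> R, (forall x, continuous g x) ->
            is_RInt (fun x => g (chi t x + f * x)) (- (2 * PI / 3)) (- (PI / 3))
                    (RInt (fun x => g (chi t x + f * x)) (- (2 * PI / 3)) (- (PI / 3)))).
  { intros g Hg. apply (RInt_correct (V:=R_CompleteNormedModule)),
      (ex_RInt_continuous (V:=R_CompleteNormedModule)).
    intros x _. apply (continuous_comp (fun x => chi t x + f * x)); [|apply Hg].
    apply (ex_derive_continuous (V:=R_NormedModule)). unfold chi. auto_derive. auto. }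
  assert (HK : Kent t n k = (osc_cos (chi t) (- (2 * PI / 3)) (- (PI / 3)) f,
                             - osc_sin (chi t) (- (2 * PI / 3)) (- (PI / 3)) f)).
  { unfold Kent. apply (is_RInt_unique (V:=C_R_CompleteNormedModule)).
    apply (is_RInt_fct_extend_pair (U:=R_NormedModule) (V:=R_NormedModule)); simpl.
    - apply (is_RInt_ext (fun x => cos (chi t x + f * x))); [intros; now rewrite Hphase|].
      apply Hint, continuous_cos.
    - apply (is_RInt_ext (fun x => opp (sin (chi t x + f * x)))); [intros; now rewrite Hphase|].
      apply (is_RInt_opp (V:=R_NormedModule)), Hint, continuous_sin. }
  rewrite HK. unfold Cmod, Kent_energy, osc_energy; simpl fst; simpl snd.
  rewrite pow2_sqrt by nra. ring.
Qed.

Lemma sqrt3_ge : 8 / 5 <= sqrt 3.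
Proof.
  assert (H := sqrt_sqrt 3 ltac:(lra)). assert (0 <= sqrt 3) by apply sqrt_pos. nra.
Qed.

Lemma sin_le_Kent_interval x : - (2 * PI / 3) <= x <= - (PI / 3) -> sin x <= - (4 / 5).
Proof.
  intros Hx. assert (Hpi := PI_RGT_0). assert (H3 := sqrt3_ge).
  rewrite <- (Ropp_involutive x), sin_neg.
  assert (sin (PI / 3) <= sin (- x)).
  { destruct (Rle_or_lt (- x) (PI / 2)).
    - apply sin_incr_1; lra.
    - rewrite <- (sin_PI_x (- x)). apply sin_incr_1; lra. }
  rewrite sin_PI3 in H. lra.
Qed.

Lemma RInt_cos_Kent_phase_le t f alpha : 1 <= t -> 0 <= f <= t ->
  Rabs (RInt (fun x => cos (chi t x + f * x + alpha)) (- (2 * PI / 3)) (- (PI / 3))) <= 12 / t.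
Proof.
  intros Ht Hf. assert (Hpi := PI_RGT_0). assert (Hpi4 := PI_4).
  eapply Rle_trans.
  - apply (RInt_cos_nonstationary _ (fun x => 2 * t * sin x + f) (fun x => 2 * t * cos x)
             _ _ (3 * t / 5) (2 * t)).
    + intros x. unfold chi. auto_derive; auto. ring.
    + intros x. auto_derive; auto. ring.
    + intros x. apply (ex_derive_continuous (V:=R_NormedModule)). auto_derive. auto.
    + lra.
    + lra.
    + intros x Hx. assert (H := sin_le_Kent_interval x Hx).
      rewrite Rabs_left by nra. nra.
    + intros x _. rewrite Rabs_mult, Rabs_pos_eq by lra.
      assert (Rabs (cos x) <= 1) by apply Rabs_le, COS_bound. nra.
  - replace (2 / (3 * t / 5) + (- (PI / 3) - - (2 * PI / 3)) * (2 * t / (3 * t / 5) ^ 2))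
      with ((10 / 3 + 50 * PI / 27) / t) by (field; lra).
    unfold Rdiv. apply Rmult_le_compat_r; [apply Rlt_le, Rinv_0_lt_compat|]; lra.
Qed.

Lemma Kent_energy_small_freq t f : 1 <= t -> 0 <= f <= t -> Kent_energy t f <= 288 / t ^ 2.
Proof.
  intros Ht Hf. unfold Kent_energy, osc_energy, osc_cos, osc_sin.
  assert (Hc := RInt_cos_Kent_phase_le t f 0 Ht Hf).
  assert (Hs := RInt_cos_Kent_phase_le t f (- (PI / 2)) Ht Hf).
  rewrite (RInt_ext _ (fun x => cos (chi t x + f * x))) in Hc
    by (intros; now rewrite Rplus_0_r).
  rewrite (RInt_ext _ (fun x => sin (chi t x + f * x))) in Hs
    by (intros; now rewrite <- cos_shift, <- cos_neg; f_equal; ring).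
  rewrite <- (pow2_abs (RInt (fun x => cos _) _ _)), <- (pow2_abs (RInt (fun x => sin _) _ _)).
  assert (0 <= 12 / t) by (apply Rdiv_le_0_compat; lra).
  replace (288 / t ^ 2) with ((12 / t) ^ 2 + (12 / t) ^ 2) by (field; lra).
  apply Rplus_le_compat; apply pow_incr; split; auto using Rabs_pos.
Qed.



Lemma pweight_mult_le_far s t n k : 1 <= s -> 0 < t -> t <= Rabs (IZR n) + Rabs (IZR k) ->
  pweight s n * pweight s k <= 2 / t * (pweight s n + pweight s k).
Proof.
  intros Hs Ht Hnk.
  assert (Hfar : forall z, t / 2 <= Rabs (IZR z) -> pweight s z <= 2 / t).
  { intros z Hz. eapply Rle_trans; [apply pweight_le_inv; lra|].
    replace (2 / t) with (/ (t / 2)) by (field; lra). apply Rinv_le_contravar; lra. }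
  assert (Hn := pweight_bounds s n ltac:(lra)). assert (Hk := pweight_bounds s k ltac:(lra)).
  destruct (Rle_or_lt (t / 2) (Rabs (IZR n))) as [Hn'|Hn'].
  - assert (pweight s n <= 2 / t) by now apply Hfar. nra.
  - assert (pweight s k <= 2 / t) by (apply Hfar; lra). nra.
Qed.

Lemma term_le sigma t n k : 1 / 2 < sigma -> 1 <= t ->
  t * term sigma t n k <=
    288 * (pweight (2 * sigma) n * pweight (2 * sigma) k)
    + (pweight (2 * sigma) n + pweight (2 * sigma) k)
      * (2 * Kent_energy_sym t (n - k)).
Proof.
  intros Hsigma Ht.
  set (wn := pweight (2 * sigma) n). set (wk := pweight (2 * sigma) k).
  set (d := IZR (n - k)).
  assert (Hw : weight sigma n k = wn * wk)
    by (unfold weight, wn, wk, pweight; now rewrite !Rpower_Ropp, Rinv_mult).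
  unfold term. rewrite Cmod_Kent_sq, Hw by lra. fold d.
  assert (Hn := pweight_bounds (2 * sigma) n ltac:(lra)).
  assert (Hk := pweight_bounds (2 * sigma) k ltac:(lra)). fold wn wk in Hn, Hk.
  assert (Hsym := Kent_energy_sym_ge0 t (n - k)).
  unfold Kent_energy_sym in *. rewrite opp_IZR in *. fold d in Hsym |- *.
  set (E := Kent_energy t) in *.
  assert (0 <= (wn + wk) * (2 * (E d + E (- d)))) by nra.
  assert (HE0 : 0 <= E (Rabs d)) by apply Kent_energy_ge0.
  destruct (Rle_or_lt (Rabs d) t) as [Hnear|Hfar].
  - assert (HE := Kent_energy_small_freq t (Rabs d) Ht (conj (Rabs_pos d) Hnear)).
    assert (t * E (Rabs d) <= 288).
    { apply Rle_trans with (t * (288 / t ^ 2)); [apply Rmult_le_compat_l; [lra|auto]|].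
      replace (t * (288 / t ^ 2)) with (288 * / t) by (field; lra).
      assert (/ t <= 1) by (rewrite <- Rinv_1; apply Rinv_le_contravar; lra). lra. }
    assert (0 <= wn * wk) by nra.
    nra.
  - assert (HE : E (Rabs d) <= E d + E (- d)).
    { assert (0 <= E d) by apply Kent_energy_ge0. assert (0 <= E (- d)) by apply Kent_energy_ge0.
      destruct (Rcase_abs d); [rewrite Rabs_left|rewrite Rabs_right]; lra. }
    assert (Hww : wn * wk <= 2 / t * (wn + wk)).
    { apply pweight_mult_le_far; [lra|lra|].
      apply Rle_trans with (Rabs d); [lra|]. unfold d. rewrite minus_IZR.
      eapply Rle_trans; [apply Rabs_triang|]. now rewrite Rabs_Ropp. }
    apply Rle_trans with (t * ((E d + E (- d)) * (2 / t * (wn + wk)))).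
    + apply Rmult_le_compat_l; [lra|]. apply Rmult_le_compat; nra.
    + replace (t * ((E d + E (- d)) * (2 / t * (wn + wk))))
        with ((wn + wk) * (2 * (E d + E (- d)))) by (field; lra).
      nra.
Qed.

Lemma sum_Kent_energy_le t (F : nat -> Z) n :
  (forall j l, (j <= n)%nat -> (l <= n)%nat -> F j = F l -> j = l) ->
  sum_f_R0 (fun j => Kent_energy t (IZR (F j))) n <= 2 * PI * (PI / 3).
Proof.
  intros HF. assert (Hpi := PI_RGT_0).
  apply Rle_trans with (2 * PI * (- (PI / 3) - - (2 * PI / 3))); [|right; field].
  apply bessel_osc_energy; [|lra|auto].
  intros x. apply (ex_derive_continuous (V:=R_NormedModule)). unfold chi. auto_derive. auto.
Qed.

Lemma sum_Kent_energy_sym_le t (F : nat -> Z) n :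
  (forall j l, (j <= n)%nat -> (l <= n)%nat -> F j = F l -> j = l) ->
  sum_f_R0 (fun j => Kent_energy_sym t (F j)) n <= 4 * PI * (PI / 3).
Proof.
  intros HF. unfold Kent_energy_sym. rewrite sum_plus.
  assert (H := sum_Kent_energy_le t F n HF).
  assert (H' := sum_Kent_energy_le t (fun j => - F j)%Z n
                  ltac:(intros j l Hj Hl E; cbv beta in E; apply HF; auto; lia)).
  lra.
Qed.

Theorem lemma2p2 : forall sigma : R, 1 / 2 < sigma ->
  exists Cst : R, 0 < Cst /\
    forall t : R, 1 <= t -> forall N : nat, box_sum sigma t N <= Cst / t.
Proof.
  intros sigma Hsigma.
  set (W := 2 * (Rpower 2 (2 * sigma) / (2 * sigma - 1))).
  set (B := 8 * PI * (PI / 3)).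
  assert (HW : 0 < W) by (apply Rmult_lt_0_compat, Rdiv_lt_0_compat; [lra|apply Rpower_pos|lra]).
  assert (HB : 0 < B) by (unfold B; assert (Hpi := PI_RGT_0); nra).
  exists (288 * W ^ 2 + 2 * (W * B)). split; [nra|].
  intros t Ht N.
  set (z i := (Z.of_nat i - Z.of_nat N)%Z).
  set (w i := pweight (2 * sigma) (z i)).
  set (g i j := 2 * Kent_energy_sym t (z i - z j)).
  assert (Hrow : forall i, sum_f_R0 (g i) (2 * N) <= B).
  { intros i. unfold g. rewrite sum_f_R0_mult_l.
    assert (H := sum_Kent_energy_sym_le t (fun j => z i - z j)%Z (2 * N)
                   ltac:(intros; unfold z in *; lia)).
    unfold B. lra. }
  assert (Hcol : forall j, sum_f_R0 (fun i => g i j) (2 * N) <= B).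
  { intros j. unfold g. rewrite sum_f_R0_mult_l.
    assert (H := sum_Kent_energy_sym_le t (fun i => z i - z j)%Z (2 * N)
                   ltac:(intros; unfold z in *; lia)).
    unfold B. lra. }
  assert (Hbox : t * box_sum sigma t N <= 288 * W ^ 2 + 2 * (W * B)).
  { unfold box_sum. rewrite <- sum_f_R0_mult_l.
    rewrite (sum_eq _ (fun i => sum_f_R0 (fun j => t * term sigma t (z i) (z j)) (2 * N)))
      by (intros; now rewrite sum_f_R0_mult_l).
    apply double_sum_schur with (g := g) (w := w); auto; try lra.
    - intros i. apply Rlt_le, pweight_bounds. lra.
    - apply sum_pweight_le. lra.
    - intros i j. unfold g. assert (H := Kent_energy_sym_ge0 t (z i - z j)). lra.
    - intros i j _ _. apply term_le; lra. }
  apply Rmult_le_reg_l with t; [lra|].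
  replace (t * ((288 * W ^ 2 + 2 * (W * B)) / t)) with (288 * W ^ 2 + 2 * (W * B)) by (field; lra).
  exact Hbox.
Qed.
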